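(* Let $x$ be sufficiently large, let $N$ be any integer, and let $y=\lfloor 0.08x\rfloor$. Then there is a residue class $b \bmod P(x)$ such that $$(S_x-b)\cap[-y,y]=\varnothing\quad\text{and}\quad (S_x-N+b)\cap[-y,y]=\varnothing .$$
   Context: $p$ always denotes a prime. For $x\ge 2$, $S_x=\{n\in\mathbb Z:\ n\not\equiv 0 \pmod p \text{ for every prime } p\le x\}$, and $P(x)=\prod_{p\le x}p$. For a set $S\subset\mathbb Z$ and an integer $t$, $S-t=\{s-t:s\in S\}$; since $S_x$ is $P(x)$-periodic, $S_x-b$ depends only on $b\bmod P(x)$. *)

From Stdlib Require Export Reals ZArith Znumtheory.
Open Scope R_scope.

Definition in_S (x : R) (n : Z) : Prop :=
  forall p : Z, prime p -> IZR p <= x -> ~ (p | n)%Z.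

Definition floorR (r : R) : Z := Int_part r.

From Stdlib Require Import Reals ZArith Znumtheory.
Open Scope R_scope.
From Stdlib Require Import Lia Lra Psatz.
From mathcomp Require Import all_boot zify ssrZ cyclic.

(* Let M = z! with z about x^(3/4), and call n in [-y, y] a survivor of the shift b
   when n + b or n + N - b is coprime to M.  Averaged over b mod M, the number of
   survivors is 2 (2y + 1) phi(M) / M, and phi(M) H_z <= M because every k <= z
   divides M; since the harmonic number H_z exceeds log z, some b0 leaves at most
   about 0.32 x / ((3/4) log x) < 0.43 x / log x survivors.  Chebyshev's bound
   4^m <= (2m + 1) (2m)^pi(2m) gives more than x / (2 log x) primes up to x, so each
   survivor can be assigned its own prime in (z, x], and the Chinese remainder
   theorem yields b = b0 mod M for which every survivor is divisible by its prime. *)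

Open Scope nat_scope.

(** * Chebyshev's lower bound for the prime counting function *)

Definition prime_pi (n : nat) : nat := count prime (iota 0 n.+1).

Lemma prime_dvd_fact_le p n : prime p -> p %| n`! -> p <= n.
Proof.
move=> pp; rewrite fact_prod (Euclid_dvd_prod _ _ _ pp) big_has.
move/hasP => [i]; rewrite mem_index_iota => /andP[i1 i2] pi.
by apply: leq_trans (dvdn_leq i1 pi) _; rewrite -ltnS.
Qed.

Lemma prime_pi_le_count_above (n z X : nat) : n <= X -> z <= X ->
  prime_pi n <= z.+1 + count prime (index_iota z.+1 X.+1).
Proof.
move=> nX zX; apply: (@leq_trans (count prime (iota 0 X.+1))).
  by rewrite /prime_pi (_ : X.+1 = n.+1 + (X - n)) ?iotaD ?count_cat ?leq_addr //; lia.
rewrite /index_iota (_ : X.+1 = z.+1 + (X - z)); last lia.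
rewrite iotaD count_cat addKn add0n leq_add2r.
by apply: leq_trans (count_size _ _) _; rewrite size_iota.
Qed.

Lemma central_binomial_succ m :
  m.+1 * 'C((m.+1).*2, m.+1) = 2 * (m.*2).+1 * 'C(m.*2, m).
Proof.
have C : 'C((m.*2).+1, m) = 'C((m.*2).+1, m.+1).
  have e : (m.*2).+1 - m = m.+1 by lia.
  by rewrite -e bin_sub // leqW // -addnn leq_addr.
rewrite doubleS -[LHS](mul_bin_diag (m.*2).+2 m) succnK C.
by rewrite -doubleS -mul2n -mulnA -(mul_bin_diag (m.*2).+1 m) mulnA.
Qed.

Lemma four_pow_le_central_binomial m : 4 ^ m <= (m.*2).+1 * 'C(m.*2, m).
Proof.
elim: m => [|m IH]; first by rewrite bin0.
rewrite -(leq_pmul2l (ltn0Sn m)) expnS [in X in _ <= X]mulnCA central_binomial_succ.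
rewrite -mulnA mulnA [X in _ <= X]mulnA; apply: leq_mul IH; rewrite doubleS; lia.
Qed.

Lemma divn_double_le m d : 0 < d -> m.*2 %/ d <= (m %/ d).*2 + (d <= m.*2).
Proof.
move=> d0; have e := divn_eq m d; have r := ltn_pmod m d0.
have : m.*2 %/ d <= (m %/ d).*2 + 1 by rewrite -ltnS ltn_divLR // {1}e; lia.
case: (leqP d m.*2) => h /=; first by rewrite addn1.
by rewrite divn_small.
Qed.

Lemma sum_nat_leq_min n T : \sum_(1 <= k < n.+1) (k <= T) = minn n T.
Proof.
elim: n => [|n IH]; first by rewrite big_geq // min0n.
by rewrite big_nat_recr //= IH; case: (leqP n.+1 T) => h /=; lia.
Qed.

Lemma logn_central_binomial_le p m : prime p ->
  logn p 'C(m.*2, m) <= trunc_log p m.*2.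
Proof.
move=> pp; have p1 := prime_gt1 pp.
have hb := bin_fact (leq_addr m m); rewrite addnK addnn in hb.
have e : logn p 'C(m.*2, m) + (logn p m`!).*2 = logn p m.*2`!.
  have C0 : 0 < 'C(m.*2, m) by rewrite bin_gt0 -addnn leq_addr.
  by rewrite -hb !lognM ?muln_gt0 ?fact_gt0 // addnn.
rewrite !logn_fact // in e.
have ext : \sum_(1 <= k < m.+1) m %/ p ^ k = \sum_(1 <= k < m.*2.+1) m %/ p ^ k.
  rewrite [RHS](@big_cat_nat _ _ _ m.+1) //=; last by rewrite ltnS -addnn leq_addr.
  rewrite [X in _ = _ + X]big1_seq ?addn0 // => k.
  rewrite mem_index_iota => /andP[_ /andP[hk _]].
  by rewrite divn_small //; apply: leq_trans (ltn_expl k p1); exact: ltnW.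
have step : \sum_(1 <= k < m.*2.+1) m.*2 %/ p ^ k <=
    \sum_(1 <= k < m.*2.+1) (2 * (m %/ p ^ k) + (k <= trunc_log p m.*2)).
  apply: leq_sum => k _; have pk0 : 0 < p ^ k by rewrite expn_gt0 ltnW.
  apply: (leq_trans (divn_double_le m _ pk0)); rewrite mul2n.
  case h: (p ^ k <= m.*2) => //=; first by rewrite (trunc_log_max p1 h).
  by rewrite addn0 leq_addr.
rewrite big_split /= sum_nat_leq_min -big_distrr /= in step.
rewrite ext in e; move: e step; rewrite -!mul2n; lia.
Qed.

Lemma central_binomial_le_prime_pi m : 'C(m.*2, m) <= m.*2 ^ prime_pi m.*2.
Proof.
have C0 : 0 < 'C(m.*2, m) by rewrite bin_gt0 -addnn leq_addr.
have small p : p \in primes 'C(m.*2, m) -> prime p && (p <= m.*2).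
  rewrite mem_primes => /and3P[pp _ pC]; rewrite pp prime_dvd_fact_le //.
  by have := bin_fact (leq_addr m m); rewrite addnK addnn => <-; rewrite dvdn_mulr.
rewrite {1}(prod_prime_decomp C0) prime_decompE big_map /=.
apply: (@leq_trans (m.*2 ^ size (primes 'C(m.*2, m)))).
  have -> : m.*2 ^ size (primes 'C(m.*2, m)) = \prod_(p <- primes 'C(m.*2, m)) m.*2.
    by rewrite big_const_seq count_predT iter_muln_1.
  rewrite big_seq [X in _ <= X]big_seq; apply: leq_prod => p /small /andP[pp p2m].
  apply: leq_trans (trunc_logP (prime_gt1 pp) _); last by rewrite (leq_trans (prime_gt0 pp)).
  by rewrite leq_exp2l ?prime_gt1 // logn_central_binomial_le.
case: m C0 small => [|m] C0 small //.
apply: leq_pexp2l => //; rewrite /prime_pi -(size_filter prime).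
apply: uniq_leq_size => [|p /small /andP[pp p2m]]; first exact: primes_uniq.
by rewrite mem_filter pp mem_iota /= ltnS.
Qed.

Lemma chebyshev_lower_bound m : 4 ^ m <= (m.*2).+1 * m.*2 ^ prime_pi m.*2.
Proof.
apply: leq_trans (four_pow_le_central_binomial m) _.
by rewrite leq_mul2l central_binomial_le_prime_pi orbT.
Qed.

(** * Euler's totient on a highly divisible modulus *)

Lemma sum_nat_modn_mul_period (f : nat -> nat) m j :
  \sum_(0 <= u < j * m) f (u %% m) = j * \sum_(0 <= u < m) f (u %% m).
Proof.
elim: j => [|j IH]; first by rewrite mul0n big_geq.
rewrite mulSn (big_cat_nat (n := j * m)) ?leq_addl //= IH addnC; congr (_ + _).
rewrite -{1}[j * m]add0n big_addn addnK.
by apply: eq_bigr => u _; rewrite addnC modnMDl.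
Qed.

Lemma totient_le_mul_totient_div M k : k %| M -> totient M <= k * totient (M %/ k).
Proof.
move=> kM; set m := M %/ k.
have EM : M = k * m by rewrite /m mulnC divnK.
have mM : m %| M by rewrite EM dvdn_mull.
rewrite !totient_count_coprime.
under [X in _ <= _ * X]eq_bigr => d _ do rewrite -coprime_modr.
rewrite -(sum_nat_modn_mul_period (fun d => coprime m d)) -EM.
apply: leq_sum => u _; rewrite coprime_modr.
by case H: (coprime M u) => //=; rewrite (coprime_dvdl mM H).
Qed.

Lemma sum_totient_div_le M z : 0 < M -> (forall k, 0 < k <= z -> k %| M) ->
  \sum_(1 <= k < z.+1) totient (M %/ k) <= M.
Proof.
move=> M0 hdv.
have -> : \sum_(1 <= k < z.+1) totient (M %/ k) =
    \sum_(i <- [seq M %/ k | k <- iota 1 z]) totient i.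
  by rewrite big_map /index_iota subn1.
rewrite -[X in _ <= X](sum_totient_dvd M) -(big_mkord (fun d => d %| M)) -[X in _ <= X]big_filter.
apply: (@uniq_sub_le_big nat addn leq leqnn (fun x y => leq_addr y x)).
- rewrite map_inj_in_uniq ?iota_uniq //.
  move=> k1 k2; rewrite !mem_iota !add1n !ltnS => /andP[h1 h1'] /andP[h2 h2'] e.
  have d1 : k1 %| M by apply: hdv; rewrite h1 h1'.
  have d2 : k2 %| M by apply: hdv; rewrite h2 h2'.
  have q0 : 0 < M %/ k1 by rewrite divn_gt0 // dvdn_leq.
  have := divnK d1; have := divnK d2; rewrite -e => e2 e1.
  by apply/eqP; rewrite -(eqn_pmul2l q0) e1 e2.
- by rewrite filter_uniq // iota_uniq.
- move=> d /mapP [k]; rewrite mem_iota add1n ltnS => /andP[h1 h2] ->.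
  have dk : k %| M by apply: hdv; rewrite h1 h2.
  by rewrite mem_filter mem_iota /= add0n ltnS leq_div andbT dvdn_div.
Qed.

(** * Survivors of a shifted sieve *)

Lemma exists_le_average (M : nat) (F : 'I_M -> nat) : 0 < M ->
  exists b, F b * M <= \sum_(i < M) F i.
Proof.
case: M F => [//|M] F _.
have [b _ bmin] := arg_minnP F (isT : predT ord0).
exists b; rewrite mulnC -[X in X * _]card_ord -sum_nat_const.
by apply: leq_sum => i _; apply: bmin.
Qed.

Open Scope Z_scope.

Definition coprimeZ (M : nat) (t : Z) : bool := coprime M (Z.to_nat (t mod Z.of_nat M)).

Lemma Zdivide_sub_small_eq (M b b' : nat) : (b < M)%N -> (b' < M)%N ->
  (Z.of_nat M | Z.of_nat b - Z.of_nat b') -> b = b'.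
Proof.
move=> hb hb' [k hk]; have k0 : k = 0 by nia.
by rewrite k0 in hk; lia.
Qed.

Lemma sum_coprimeZ_residues (M : nat) (f : nat -> Z) : (0 < M)%N ->
  (forall b b', (b < M)%N -> (b' < M)%N -> (Z.of_nat M | f b - f b') -> b = b') ->
  (\sum_(b < M) coprimeZ M (f b))%N = totient M.
Proof.
move=> M0 finj; have MZ : 0 < Z.of_nat M by lia.
have res_lt (b : 'I_M) : (Z.to_nat (f b mod Z.of_nat M) < M)%N.
  by have := Z.mod_pos_bound (f b) _ MZ; lia.
pose h (b : 'I_M) : 'I_M := Ordinal (res_lt b).
have hinj : injective h.
  move=> b1 b2 /(congr1 val) /= e; apply/val_inj/finj; try exact: ltn_ord.
  apply Z.mod_divide; first lia.
  have e' : f b1 mod Z.of_nat M = f b2 mod Z.of_nat M.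
    by have := Z.mod_pos_bound (f b1) _ MZ; have := Z.mod_pos_bound (f b2) _ MZ; lia.
  by rewrite Zminus_mod e' Z.sub_diag.
rewrite totient_count_coprime big_mkord [RHS](reindex_inj hinj).
by apply: eq_bigr.
Qed.

Definition window (Y : nat) : seq Z :=
  [seq Z.of_nat i - Z.of_nat Y | i <- iota 0 (Y.*2.+1)].

(* A survivor n is recorded as the residue t for which [q | b - t] means that the
   prime q divides the surviving number: t = -n for n + b, t = n + N for n + N - b. *)
Definition survivors (M Y : nat) (N b : Z) : seq Z :=
  [seq - n | n <- window Y & coprimeZ M (n + b)] ++
  [seq n + N | n <- window Y & coprimeZ M (n + N - b)].

Lemma mem_window (Y : nat) (n : Z) : - Z.of_nat Y <= n <= Z.of_nat Y -> n \in window Y.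
Proof.
move=> hn; apply/mapP; exists (Z.to_nat (n + Z.of_nat Y)); last lia.
by rewrite mem_iota; apply/andP; split; lia.
Qed.

Lemma exists_shift_few_survivors (M Y : nat) (N : Z) : (0 < M)%N ->
  exists b : nat, (size (survivors M Y N (Z.of_nat b)) * M <= (Y.*2.+1).*2 * totient M)%N.
Proof.
move=> M0.
have shiftD c : (\sum_(i < M) coprimeZ M (c + Z.of_nat i))%N = totient M.
  apply: (sum_coprimeZ_residues M (fun i => c + Z.of_nat i)) => // i i' hi hi' hd.
  by apply: Zdivide_sub_small_eq hi hi' _; apply: (Z.divide_trans _ _ _ hd); exists 1; lia.
have shiftB c : (\sum_(i < M) coprimeZ M (c - Z.of_nat i))%N = totient M.
  apply: (sum_coprimeZ_residues M (fun i => c - Z.of_nat i)) => // i i' hi hi' hd.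
  by apply: Zdivide_sub_small_eq hi hi' _; apply: (Z.divide_trans _ _ _ hd); exists (-1); lia.
have count_sum (a : pred Z) s : count a s = (\sum_(n <- s) a n)%N.
  by rewrite -sum1_count big_mkcond; apply: eq_bigr => n _; case: (a n).
have total :
    (\sum_(b < M) size (survivors M Y N (Z.of_nat b)))%N = ((Y.*2.+1).*2 * totient M)%N.
  under eq_bigr => i _ do rewrite size_cat !size_map !size_filter !count_sum.
  rewrite big_split /= exchange_big [X in (_ + X)%N]exchange_big /=.
  under eq_bigr => n _ do rewrite shiftD.
  under [X in (_ + X)%N]eq_bigr => n _ do rewrite shiftB.
  rewrite big_const_seq count_predT iter_addn_0 size_map size_iota; nia.
have [b hb] := exists_le_average _ (fun b : 'I_M => size (survivors M Y N (Z.of_nat b))) M0.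
by exists b; rewrite -total.
Qed.

(** * Covering the survivors by the Chinese remainder theorem *)

Lemma crt_pair (M q b0 t : Z) : rel_prime M q ->
  exists b, (M | b - b0) /\ (q | b - t).
Proof.
move=> /rel_prime_bezout [u v huv]; exists (b0 + (t - b0) * (u * M)); split.
  by exists ((t - b0) * u); ring.
by exists ((b0 - t) * v); rewrite (_ : u * M = 1 - v * q); [ring | lia].
Qed.

Lemma crt_cover (M b0 : Z) (ts qs : seq Z) : uniq qs ->
  (forall q, q \in qs -> Znumtheory.prime q /\ ~ (q | M)) -> (size ts <= size qs)%N ->
  exists b, (M | b - b0) /\ forall t, t \in ts -> exists2 q, q \in qs & (q | b - t).
Proof.
elim: ts M b0 qs => [|t ts IH] M b0 [|q qs] //= uq hqs hsize.
1,2: by exists b0; split=> //; exists 0; ring.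
have [qp qM] := hqs q (mem_head q qs).
have [b1 [hb1M hb1q]] := crt_pair M q b0 t (rel_prime_sym _ _ (prime_rel_prime _ qp _ qM)).
case/andP: uq => qqs uqs.
have hqs' q' : q' \in qs -> Znumtheory.prime q' /\ ~ (q' | M * q).
  move=> hq'; have /hqs [q'p q'M] : q' \in q :: qs by rewrite inE hq' orbT.
  split=> // /(prime_mult _ q'p) [//|/(prime_div_prime _ _ q'p qp) eq'].
  by move: qqs; rewrite -eq' hq'.
have [b [hbMq hbts]] := IH (M * q) b1 qs uqs hqs' hsize.
have hbM := Z.divide_trans _ _ _ (Z.divide_factor_l M q) hbMq.
have hbq := Z.divide_trans _ _ _ (Z.divide_factor_r q M) hbMq.
exists b; split.
  by rewrite (_ : b - b0 = (b - b1) + (b1 - b0)); [exact: Z.divide_add_r | ring].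
move=> t'; rewrite inE => /orP [/eqP -> | /hbts [q' hq' hd]].
  exists q; first exact: mem_head.
  by rewrite (_ : b - t = (b - b1) + (b1 - t)); [exact: Z.divide_add_r | ring].
by exists q' => //; rewrite inE hq' orbT.
Qed.

Lemma Zdivide_of_dvdn d n : (d %| n)%N -> (Z.of_nat d | Z.of_nat n).
Proof. by move/dvdnP => [k ->]; exists (Z.of_nat k); lia. Qed.

Lemma dvdn_of_Zdivide d n : (Z.of_nat d | Z.of_nat n) -> (d %| n)%N.
Proof.
move=> [k hk]; case: (Z.le_gt_cases 0 k) => hk0.
  by apply/dvdnP; exists (Z.to_nat k); nia.
by case: n hk => [|n] hk; [rewrite dvdn0 | nia].
Qed.

Lemma prime_Z p : prime p -> Znumtheory.prime (Z.of_nat p).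
Proof.
move=> pp; apply/prime_alt; split; first by have := prime_gt1 pp; lia.
move=> n hn; rewrite -(Z2Nat.id n); last lia.
move/dvdn_of_Zdivide/(prime_nt_dvdP pp); lia.
Qed.

Definition sieved (X : nat) (t : Z) : Prop :=
  exists p : nat, [/\ prime p, (p <= X)%N & (Z.of_nat p | t)].

Lemma sieved_of_not_coprimeZ (M X : nat) (c c0 : Z) : (0 < M)%N ->
  (forall p, prime p -> (p %| M)%N -> (p <= X)%N) ->
  (Z.of_nat M | c - c0) -> ~~ coprimeZ M c0 -> sieved X c.
Proof.
move=> M0 hM hc; have MZ : 0 < Z.of_nat M by lia.
rewrite /coprimeZ; set r := Z.to_nat _ => hr.
have rE : Z.of_nat r = c0 mod Z.of_nat M.
  by rewrite Z2Nat.id //; have := Z.mod_pos_bound c0 _ MZ; lia.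
have g1 : (1 < gcdn M r)%N by move: hr; rewrite /coprime ltn_neqAle eq_sym gcdn_gt0 M0 => ->.
have pp := pdiv_prime g1; have pg := pdiv_dvd (gcdn M r).
have pM := dvdn_trans pg (dvdn_gcdl M r); have pr := dvdn_trans pg (dvdn_gcdr M r).
exists (pdiv (gcdn M r)); split; [done | exact: hM |].
have /Zdivide_of_dvdn hpM := pM; move/Zdivide_of_dvdn: pr; rewrite rE => hpr.
have hp0 : (Z.of_nat (pdiv (gcdn M r)) | c0).
  rewrite (Z.div_mod c0 (Z.of_nat M)); last lia.
  by apply: Z.divide_add_r => //; exact: Z.divide_mul_l.
rewrite (_ : c = c0 + (c - c0)); last ring.
by apply: Z.divide_add_r => //; apply: Z.divide_trans hpM hc.
Qed.

Lemma exists_sieving_shift (z X Y : nat) (N : Z) (b0 : nat) : (z <= X)%N ->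
  (size (survivors z`! Y N (Z.of_nat b0)) <= count prime (index_iota z.+1 X.+1))%N ->
  exists b, forall n, n \in window Y -> sieved X (n + b) /\ sieved X (n + N - b).
Proof.
move=> zX hsize; set ts := survivors _ _ _ _ in hsize.
set qs := [seq Z.of_nat p | p <- index_iota z.+1 X.+1 & prime p].
have hqs q : q \in qs -> Znumtheory.prime q /\ ~ (q | Z.of_nat z`!).
  case/mapP => p; rewrite mem_filter mem_index_iota => /andP[pp /andP[zp _]] ->.
  split; first exact: prime_Z.
  by move/dvdn_of_Zdivide/(prime_dvd_fact_le _ _ pp); rewrite leqNgt zp.
have uqs : uniq qs by rewrite map_inj_uniq ?filter_uniq ?iota_uniq //; apply: Nat2Z.inj.
have [|b [hbM hbts]] := crt_cover (Z.of_nat z`!) (Z.of_nat b0) ts qs uqs hqs.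
  by rewrite size_map (size_filter prime).
have cover c c0 t : (Z.of_nat z`! | c - c0) -> (coprimeZ z`! c0 -> t \in ts) ->
    (forall q, (q | b - t) -> (q | c)) -> sieved X c.
  move=> hc0 hts hq; case hcop: (coprimeZ z`! c0).
    have [q /mapP [p]] := hbts t (hts hcop).
    rewrite mem_filter mem_index_iota => /andP[pp /andP[_ pX]] -> /hq hd.
    by exists p; split; rewrite -1?ltnS.
  apply: (sieved_of_not_coprimeZ _ _ _ c0 (fact_gt0 z)) hc0 _; last by rewrite hcop.
  by move=> p pp /(prime_dvd_fact_le _ _ pp) pz; apply: leq_trans zX.
exists b => n hn; split.
- apply: (cover _ (n + Z.of_nat b0) (- n)).
  + by apply: (Z.divide_trans _ _ _ hbM); exists 1; lia.
  + by move=> hcop; rewrite mem_cat map_f // mem_filter hn hcop.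
  + by move=> q hq; apply: (Z.divide_trans _ _ _ hq); exists 1; lia.
- apply: (cover _ (n + N - Z.of_nat b0) (n + N)).
  + by apply: (Z.divide_trans _ _ _ hbM); exists (-1); lia.
  + move=> hcop; rewrite mem_cat; apply/orP; right.
    by apply: (map_f (fun m => m + N)); rewrite mem_filter hn hcop.
  + by move=> q hq; apply: (Z.divide_trans _ _ _ hq); exists (-1); lia.
Qed.

(** * Harmonic numbers and the averaged sieve *)

Open Scope R_scope.

Lemma ln_le a b : 0 < a -> a <= b -> ln a <= ln b.
Proof. by move=> ha [hab | <-]; [left; apply: ln_increasing | right]. Qed.

Lemma ln_le_sub_one a : 0 < a -> ln a <= a - 1.
Proof.
move=> ha; rewrite -[X in _ <= X]ln_exp; apply: ln_le => //.
have := exp_ineq1_le (a - 1); lra.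
Qed.

Lemma INR_double n : INR n.*2 = 2 * INR n.
Proof. by rewrite -addnn plus_INR; lra. Qed.

Fixpoint harmonic (n : nat) : R :=
  if n is k.+1 then harmonic k + / INR k.+1 else 0.

Lemma harmonic_gt0 n : (0 < n)%N -> 0 < harmonic n.
Proof.
elim: n => [//|[|n] IH _]; first by rewrite /= Rplus_0_l Rinv_1; lra.
have := IH isT; have : 0 < / INR n.+2 by apply/Rinv_0_lt_compat/lt_0_INR; lia.
rewrite /=; lra.
Qed.

Lemma ln_succ_le_harmonic n : ln (INR n + 1) <= harmonic n.
Proof.
elim: n => [|n IH]; first by rewrite /= Rplus_0_l ln_1; lra.
have n0 : 0 < INR n + 1 by have := pos_INR n; lra.
have hinv : 0 < / (INR n + 1) by apply: Rinv_0_lt_compat.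
rewrite /= -/(INR n.+1) S_INR.
rewrite (_ : INR n + 1 + 1 = (INR n + 1) * (1 + / (INR n + 1))); last by field; lra.
rewrite ln_mult; [|lra|lra].
have := ln_le_sub_one (1 + / (INR n + 1)); lra.
Qed.

Lemma totient_mul_harmonic_le (M z : nat) : (0 < M)%N ->
  (forall k, (0 < k <= z)%N -> (k %| M)%N) -> INR (totient M) * harmonic z <= INR M.
Proof.
move=> M0 hdv.
have partial j : (j <= z)%N ->
    INR (totient M) * harmonic j <= INR (\sum_(1 <= k < j.+1) totient (M %/ k)).
  elim: j => [|j IH] hj; first by rewrite big_geq //= Rmult_0_r; lra.
  rewrite big_nat_recr //= plus_INR Rmult_plus_distr_l.
  apply: Rplus_le_compat; first exact/IH/ltnW.
  have j0 : 0 < INR j.+1 by apply: lt_0_INR; lia.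
  have := le_INR _ _ (ssrnat.leP (totient_le_mul_totient_div _ _ (hdv j.+1 hj))).
  rewrite mult_INR => h; apply: (Rmult_le_reg_l (INR j.+1)) => //.
  by rewrite -Rmult_assoc (Rmult_comm (INR j.+1)) Rmult_assoc Rinv_r ?Rmult_1_r; lra.
apply: Rle_trans (partial z (leqnn z)) _.
exact/le_INR/ssrnat.leP/sum_totient_div_le.
Qed.

Lemma exists_shift_survivors_le (z Y : nat) (N : Z) (P : nat) : (0 < z)%N ->
  2 * INR (Y.*2.+1) <= INR P * harmonic z ->
  exists b0 : nat, (size (survivors z`! Y N (Z.of_nat b0)) <= P)%N.
Proof.
move=> z0 hP; have M0 := fact_gt0 z; have hH := harmonic_gt0 z z0.
have [b0 hb0] := exists_shift_few_survivors z`! Y N M0; exists b0.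
have hM : 0 < INR z`! by apply/lt_0_INR/ssrnat.ltP.
have := le_INR _ _ (ssrnat.leP hb0); rewrite !mult_INR INR_double => hS.
have hT := totient_mul_harmonic_le z`! z M0 (fun k hk => dvdn_fact hk).
have K0 := pos_INR (Y.*2.+1).
apply/ssrnat.leP/INR_le/(Rmult_le_reg_r (harmonic z)) => //; apply: Rle_trans hP.
apply: (Rmult_le_reg_r (INR z`!)) => //.
have := Rmult_le_compat_r _ _ _ (Rlt_le _ _ hH) hS.
have := Rmult_le_compat_l (2 * INR (Y.*2.+1)) _ _ (ltac:(lra)) hT.
lra.
Qed.

(** * Counting the primes beyond z *)

Lemma INR_expn a n : INR (a ^ n)%N = INR a ^ n.
Proof. by elim: n => [|n IH] //; rewrite expnS mult_INR IH. Qed.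

Lemma chebyshev_lower_bound_ln m : (0 < m)%N ->
  INR m * ln 4 <= ln (2 * INR m + 1) + INR (prime_pi m.*2) * ln (2 * INR m).
Proof.
move=> m0; have m1 : 1 <= INR m by apply/(le_INR 1)/ssrnat.leP.
have := le_INR _ _ (ssrnat.leP (chebyshev_lower_bound m)).
rewrite mult_INR !INR_expn (_ : INR 4 = 4) ?S_INR ?INR_double; last by simpl; lra.
rewrite -!ln_pow; [|lra|lra]; rewrite -ln_mult; [|lra|apply: pow_lt; lra].
by move=> h; apply: ln_le; [apply: pow_lt; lra | lra].
Qed.

Lemma chebyshev_margin (t z m P K : R) : 1000 <= t ->
  0 <= z <= t ^ 6 -> t ^ 6 <= z + 1 -> K <= 16 / 100 * t ^ 8 + 1 ->
  t ^ 8 - 2 <= 2 * m <= t ^ 8 -> m * ln 4 <= ln (2 * m + 1) + P * ln (2 * m) ->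
  2 * K <= (P - z - 1) * ln (z + 1).
Proof.
move=> ht hz hz1 hK hm hcheb.
have t6 : 1 <= t ^ 6 by apply: pow_R1_Rle; lra.
have t7 : 1000 * t ^ 6 <= t ^ 7 by rewrite [t ^ 7]/= -/(t ^ 6); nra.
have t8 : 1000 * t ^ 7 <= t ^ 8 by rewrite [t ^ 8]/= -/(t ^ 7); nra.
have lt0 : 0 < ln t by rewrite -ln_1; apply: ln_increasing; lra.
have ltt : ln t <= t by have := ln_le_sub_one t; lra.
have ln_t6 : ln (t ^ 6) = 6 * ln t by rewrite ln_pow /=; lra.
have ln_t8 : ln (t ^ 8) = 8 * ln t by rewrite ln_pow /=; lra.
have hz6 : 6 * ln t <= ln (z + 1) by rewrite -ln_t6; apply: ln_le; lra.
have hm8 : ln (2 * m) <= 8 * ln t by rewrite -ln_t8; apply: ln_le; lra.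
have hm81 : ln (2 * m + 1) <= 1 + 8 * ln t.
  have : ln (2 * m + 1) <= ln 2 + ln (t ^ 8) by rewrite -ln_mult; [apply: ln_le|..]; lra.
  have := ln_le_sub_one 2; lra.
have h4 : 1 <= ln 4.
  by rewrite (_ : 4 = 2 * 2) ?ln_mult; [have := ln_lt_2; lra | lra | lra | lra].
have hP : m - 1 - 8 * ln t <= P * (8 * ln t).
  have P0 : 0 <= P.
    apply: Rnot_lt_le => P0; have : 0 < ln (2 * m) by rewrite -ln_1; apply: ln_increasing; lra.
    nra.
  have : P * ln (2 * m) <= P * (8 * ln t) by apply: Rmult_le_compat_l.
  nra.
have hzt : (z + 1) * ln t <= (t ^ 6 + 1) * t by apply: Rmult_le_compat; lra.
have hPz : 0 <= P - z - 1.
  apply: (Rmult_le_reg_r (ln t)) => //; nra.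
have : (P - z - 1) * (6 * ln t) <= (P - z - 1) * ln (z + 1) by apply: Rmult_le_compat_l.
nra.
Qed.

Lemma prime_count_surplus (t : R) (z X Y : nat) : 1000 <= t ->
  INR z <= t ^ 6 < INR z + 1 -> INR X <= t ^ 8 < INR X + 1 -> INR Y <= 8 / 100 * t ^ 8 ->
  2 * INR (Y.*2.+1) <= INR (count prime (index_iota z.+1 X.+1)) * harmonic z.
Proof.
move=> ht hz hX hY; set P' := count prime _.
have t8 : t ^ 6 <= t ^ 8 by apply: Rle_pow; [lra | apply/ssrnat.leP].
have t6 : 1 <= t ^ 6 by apply: pow_R1_Rle; lra.
have zX : (z < X.+1)%N by apply/ssrnat.ltP/INR_lt; rewrite S_INR; lra.
set m := X./2.
have mX : (m.*2 <= X)%N by rewrite /m; lia.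
have Xm : (X <= m.*2.+1)%N by rewrite /m; lia.
have hm : t ^ 8 - 2 <= 2 * INR m <= t ^ 8.
  have := le_INR _ _ (ssrnat.leP mX); have := le_INR _ _ (ssrnat.leP Xm).
  rewrite S_INR !INR_double; lra.
have m0 : (0 < m)%N by apply/ssrnat.ltP/(INR_lt 0); rewrite /=; nra.
have hpi : INR (prime_pi m.*2) <= INR z + 1 + INR P'.
  have := le_INR _ _ (ssrnat.leP (prime_pi_le_count_above m.*2 z X mX zX)).
  by rewrite (plus_INR z.+1) S_INR.
have hmarg := chebyshev_margin t (INR z) (INR m) (INR (prime_pi m.*2)) (INR (Y.*2.+1)) ht.
have hL : 0 <= ln (INR z + 1) by rewrite -ln_1; apply: ln_le; have := pos_INR z; lra.
have hH := ln_succ_le_harmonic z.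
have hP0 := pos_INR P'.
apply: (Rle_trans _ ((INR (prime_pi m.*2) - INR z - 1) * ln (INR z + 1))).
  apply: hmarg => //; [split; [exact: pos_INR | lra] | lra | | exact: chebyshev_lower_bound_ln].
  by rewrite S_INR INR_double; lra.
apply: (Rle_trans _ (INR P' * ln (INR z + 1))); first by apply: Rmult_le_compat_r; lra.
exact: Rmult_le_compat_l.
Qed.

Lemma not_in_S_of_sieved (x : R) (X : nat) (t : Z) : INR X <= x -> sieved X t -> ~ in_S x t.
Proof.
move=> hX [p [pp pX hd]] hS; apply: (hS _ (prime_Z p pp)) hd.
by rewrite -INR_IZR_INZ; apply: Rle_trans hX; exact/le_INR/ssrnat.leP.
Qed.

Lemma floorR_nat_spec (r : R) : 0 <= r -> let k := Z.to_nat (floorR r) in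
  Z.of_nat k = floorR r /\ INR k <= r < INR k + 1.
Proof.
move=> r0 /=; have [lo hi] := base_Int_part r.
have k0 : (-1 < floorR r)%Z by apply: lt_IZR; rewrite /floorR; lra.
by rewrite /floorR in k0 *; rewrite INR_IZR_INZ Z2Nat.id; [split; [done | lra] | lia].
Qed.

Lemma Rpower_inv_pow (x : R) (n : nat) : 0 < x -> (0 < n)%N -> Rpower x (/ INR n) ^ n = x.
Proof.
move=> x0 n0; rewrite -Rpower_pow ?Rpower_mult ?Rinv_l ?Rpower_1 //; last exact: exp_pos.
by apply: not_0_INR; lia.
Qed.

Lemma Rpower_pow_inv (x : R) (n : nat) : 0 < x -> (0 < n)%N -> Rpower (x ^ n) (/ INR n) = x.
Proof.
move=> x0 n0; rewrite -Rpower_pow // Rpower_mult Rinv_r ?Rpower_1 //.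
by apply: not_0_INR; lia.
Qed.

Lemma exists_root_ge (a x : R) (n : nat) : 0 < a -> (0 < n)%N -> a ^ n <= x ->
  exists2 t, a <= t & t ^ n = x.
Proof.
move=> a0 n0 hx; have x0 : 0 < x by have := pow_lt a n a0; lra.
have i0 : 0 < / INR n by apply/Rinv_0_lt_compat/lt_0_INR/ssrnat.ltP.
exists (Rpower x (/ INR n)); last exact: Rpower_inv_pow.
rewrite -{1}(Rpower_pow_inv a n) //; apply: Rle_Rpower_l; [lra | split => //].
exact: pow_lt.
Qed.

Theorem mainTheorem3 :
  exists X0 : R, forall x : R, X0 <= x ->
    forall N : Z,
    exists b : Z,
      forall n : Z,
        (- floorR (8 / 100 * x) <= n <= floorR (8 / 100 * x))%Z ->
        ~ in_S x (n + b)%Z /\ ~ in_S x (n + N - b)%Z.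
Proof.
exists (1000 ^ 8) => x hx N.
have [t ht t8] := exists_root_ge 1000 x 8 (ltac:(lra)) isT hx.
have t6 : 1000 ^ 6 <= t ^ 6 <= x.
  split; first by apply: pow_incr; lra.
  by rewrite -t8; apply: Rle_pow; [lra | apply/ssrnat.leP].
have [_ hz] := floorR_nat_spec (t ^ 6) (ltac:(lra)).
have [_ hX] := floorR_nat_spec x (ltac:(lra)).
have [hYZ hY] := floorR_nat_spec (8 / 100 * x) (ltac:(lra)).
set z := Z.to_nat _ in hz; set X := Z.to_nat _ in hX; set Y := Z.to_nat _ in hYZ hY.
have z0 : (0 < z)%N.
  have c6 : 1 <= 1000 ^ 6 by apply: pow_R1_Rle; lra.
  by apply/ssrnat.ltP/(INR_lt 0); rewrite /=; lra.
have zX : (z <= X)%N by rewrite -ltnS; apply/ssrnat.ltP/INR_lt; rewrite S_INR; lra.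
have hsurplus := prime_count_surplus t z X Y ht hz; rewrite t8 in hsurplus.
have [b0 hb0] := exists_shift_survivors_le z Y N _ z0 (hsurplus hX (proj1 hY)).
have [b hb] := exists_sieving_shift z X Y N b0 zX hb0.
exists b => n hn; rewrite -hYZ in hn.
by have [? ?] := hb n (mem_window Y n hn); split; apply: (not_in_S_of_sieved x X _ (proj1 hX)).
Qed.
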